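(* Let $d\ge 2$ and $k$ be integers with $1\le k\le d-1$, and let $\delta>0$. Then the function $F:\mathbb{R}^d\to\mathbb{R}^d$ defined by $$F({\bm{x}})=\mathrm{Huber}\big(\mathrm{StatTop}_k({\bm{x}});\delta\big)/\delta$$ (with $\mathrm{Huber}(\cdot;\delta)$ applied entrywise) is continuously differentiable.
   Context: For ${\bm{x}}\in\mathbb{R}^d$, let $\mathrm{mean}({\bm{x}})=\frac1d\sum_{i=1}^d x_i$ and $\mathrm{std}({\bm{x}})=\sqrt{\frac{1}{d-1}\sum_{i=1}^d (x_i-\mathrm{mean}({\bm{x}}))^2}$, and let $Q$ be the quantile function (inverse CDF) of the standard Gaussian distribution. Define the threshold $\theta({\bm{x}},k)=\mathrm{mean}({\bm{x}})+\mathrm{std}({\bm{x}})\cdot Q(1-\frac{k}{d})$. The soft-thresholding operator is $\mathrm{SoftThreshold}({\bm{x}},\theta)=\max\{{\bm{x}}-\theta\mathbf{1},\mathbf{0}\}\in\mathbb{R}^d$ (entrywise maximum, $\mathbf{1}$ the all-ones vector), and the statistical top-$k$ operator is $\mathrm{StatTop}_k({\bm{x}})=\mathrm{SoftThreshold}({\bm{x}},\theta({\bm{x}},k))$. The Huber function is, for a scalar $x$, $\mathrm{Huber}(x;\delta)=\frac12 x^2$ if $|x|<\delta$ and $\mathrm{Huber}(x;\delta)=\delta(|x|-\frac12\delta)$ otherwise. *)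

From HB Require Import structures.
From mathcomp Require Import all_boot all_order all_algebra.
From mathcomp Require Import all_classical all_reals all_analysis.
Set Implicit Arguments. Unset Strict Implicit. Unset Printing Implicit Defensive.
Import Order.TTheory GRing.Theory Num.Theory.
Import numFieldNormedType.Exports.
Local Open Scope classical_set_scope.
Local Open Scope ring_scope.

Section defs.
Variable R : realType.

Definition gauss_cdf (x : R) : R :=
  fine (normal_prob 0 1 `]-oo, x]).

(* quantile function (inverse CDF) of the standard Gaussian:
   Q p = inf { x | p <= Phi x } (generalized inverse; the true inverse for 0<p<1) *)
Definition gauss_quantile (p : R) : R := inf [set x : R | p <= gauss_cdf x].

Variable d : nat.

Definition vmean (x : 'rV[R]_d) : R := (\sum_(i < d) x ord0 i) / d%:R.

Definition vstd (x : 'rV[R]_d) : R :=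
  Num.sqrt ((\sum_(i < d) (x ord0 i - vmean x) ^+ 2) / (d.-1)%:R).

Definition threshold (x : 'rV[R]_d) (k : nat) : R :=
  vmean x + vstd x * gauss_quantile (1 - k%:R / d%:R).

Definition SoftThreshold (x : 'rV[R]_d) (theta : R) : 'rV[R]_d :=
  \row_i Num.max (x ord0 i - theta) 0.

Definition StatTop (k : nat) (x : 'rV[R]_d) : 'rV[R]_d :=
  SoftThreshold x (threshold x k).

Definition Huber (delta x : R) : R :=
  if `|x| < delta then x ^+ 2 / 2 else delta * (`|x| - delta / 2).

Definition HuberStatTop (k : nat) (delta : R) (x : 'rV[R]_d) : 'rV[R]_d :=
  \row_i (Huber delta (StatTop k x ord0 i) / delta).

End defs.

Definition C1 (R : realType) (n m : nat) (f : 'rV[R]_n -> 'rV[R]_m) : Prop :=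
  (forall x, differentiable f x) /\ continuous (fun x => jacobian f x).

(* Each entry of F is g(c_i(x) - q sigma(x)), where c_i(x) = x_i - mean(x),
   sigma = std, q is the Gaussian quantile and g(t) = Huber(max(t, 0); delta)/delta
   is C^1 with Lipschitz derivative and g(t) = O(t^2) at 0.  Where sigma(x) > 0
   the argument of g is smooth and the chain rule applies.  Where sigma(x) = 0
   the vector x is constant, so the threshold moves along with x: the argument
   of g at x + h depends only on h and is O(|h|), hence F is flat to second
   order at x and its derivative vanishes.  The Jacobian is continuous at such
   points because g' tends to g'(0) = 0 while the other factor stays bounded,
   as |c_j(y)| <= (d - 1) sigma(y). *)

From HB Require Import structures.
From mathcomp Require Import all_boot all_order all_algebra.
From mathcomp Require Import all_classical all_reals all_analysis.
From mathcomp Require Import ring lra.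
Import Order.TTheory GRing.Theory Num.Theory.
Import numFieldNormedType.Exports.
Set Implicit Arguments. Unset Strict Implicit. Unset Printing Implicit Defensive.
Local Open Scope ring_scope.

Section differentiability.
Context {R : realFieldType} {V W : normedModType R}.

Lemma eq_is_diff (f g df dg : V -> W) x :
  is_diff x f df -> f =1 g -> df =1 dg -> is_diff x g dg.
Proof. by move=> + /funext <- /funext <-. Qed.

Lemma is_diff_continuous (f df : V -> W) x :
  is_diff x f df -> {for x, continuous f}.
Proof. by move=> fx; apply: differentiable_continuous; exact: ex_diff. Qed.

Lemma is_diff_quadratic (f : V -> W) (L : {linear V -> W}) x C :
  continuous L -> (forall h, `|f (h + x) - f x - L h| <= C * `|h| ^+ 2) ->
  is_diff x f L.
Proof.
move=> Lc fC.
have fxL : f \o shift x = cst (f x) + L +o_ 0 id.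
  apply/eqaddoP => _/posnumP[e]; near=> h.
  rewrite /= opprD addrA (le_trans (fC h))// expr2 mulrA ler_wpM2r//.
  have C_gt0 : 0 < `|C| + 1 by rewrite ltr_wpDl.
  have he : `|h| <= e%:num / (`|C| + 1).
    by apply: ltW; near: h; apply: nbhs0_lt; rewrite divr_gt0.
  apply: (@le_trans _ _ ((`|C| + 1) * `|h|)).
    by rewrite ler_wpM2r// (le_trans (ler_norm _))// lerDl.
  by rewrite -ler_pdivlMl// mulrC.
apply: DiffDef; first by apply/diff_locallyP; rewrite (diff_unique Lc fxL).
exact: diff_unique Lc fxL.
Unshelve. all: by end_near. Qed.

Lemma is_diff_flat (f : V -> W) x C :
  (forall h, `|f (h + x)| <= C * `|h| ^+ 2) -> is_diff x f \0.
Proof.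
move=> fC; have fx0 : f x = 0.
  apply/normr0_eq0/le_anti; rewrite normr_ge0 andbT.
  by have := fC 0; rewrite add0r normr0 expr0n mulr0.
apply: (@is_diff_quadratic _ \0 x C) => [|h]; first exact: cst_continuous.
by rewrite fx0 /= !subr0.
Qed.

Lemma is_diff_bounded_linear (f : V -> W) K x :
  linear f -> (forall h, `|f h| <= K * `|h|) -> is_diff x f f.
Proof.
move=> flin fK.
pose fL : {linear V -> W} := HB.pack f (GRing.isLinear.Build _ _ _ _ _ flin).
have fc : continuous fL.
  apply/bounded_linear_continuous/linear_boundedP.
  apply: filterS (nbhs_pinfty_ge (num_real K)) => r Kr h.
  by rewrite (le_trans (fK h)) // ler_wpM2r.
apply: DiffDef; first exact: (linear_differentiable _ fc).
exact: (diff_lin _ fc).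
Qed.

Lemma is_diff_sum n (f df : 'I_n -> V -> W) x :
  (forall i, is_diff x (f i) (df i)) ->
  is_diff x (fun y => \sum_(i < n) f i y) (fun h => \sum_(i < n) df i h).
Proof.
move=> fd; rewrite -!fct_sumE.
elim/big_rec2: _ => [|i F dF _ FdF]; first exact: (is_diff_cst (0 : W) x).
exact: is_diffD.
Qed.

End differentiability.

Lemma is_diff_row (R : realFieldType) (V : normedModType R) n
    (f df : 'I_n -> V -> R) x :
  (forall i, is_diff x (f i) (df i)) ->
  is_diff x (fun y => \row_i f i y : 'rV[R]_n) (fun h => \row_i df i h).
Proof.
move=> fd.
have rowE (g : 'I_n -> V -> R) :
    (fun y => \row_i g i y : 'rV[R]_n) = fun y => \sum_(i < n) g i y *: delta_mx 0 i.
  by apply/funext => y; rewrite [LHS]row_sum_delta; apply: eq_bigr => i _; rewrite mxE.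
rewrite !rowE; apply: is_diff_sum => i.
exact: (is_diff_comp (fd i) (is_diff_scalel _ _)).
Qed.

Section matrices.
Context {R : realFieldType} {m n : nat}.

Lemma normr_entry_le (A : 'M[R]_(m, n)) i j : `|A i j| <= `|A|.
Proof.
by rewrite [leRHS]/Num.Def.normr /= mx_normrE; apply: (le_bigmax _ _ (i, j)).
Qed.

Lemma continuous_mx (T : topologicalType) (f : T -> 'M[R]_(m, n)) x :
  (forall i j, {for x, continuous (fun y => f y i j)}) -> {for x, continuous f}.
Proof.
move=> fc A [P Pnbhs PA].
have : \forall y \near x, forall ij : 'I_m * 'I_n, P ij.1 ij.2 (f y ij.1 ij.2).
  by apply: filter_forall => ij; exact: fc ij.1 ij.2 _ (Pnbhs _ _).
by apply: filterS => y Py; apply: PA => i j; exact: (Py (i, j)).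
Qed.

End matrices.

Lemma continuous_mul_bounded (R : realFieldType) (T : topologicalType)
    (a b : T -> R) x M :
  {for x, continuous a} -> a x = 0 -> (forall y, `|b y| <= M) ->
  {for x, continuous (fun y => a y * b y)}.
Proof.
move=> ac ax0 bM; apply/cvgrPdist_lt => e e0.
have M1 : 0 < `|M| + 1 by rewrite ltr_wpDl.
move/cvgrPdist_lt: ac => /(_ (e / (`|M| + 1))); rewrite divr_gt0// => /(_ isT).
apply: filterS => y; rewrite ax0 mul0r !sub0r !normrN normrM => aye.
rewrite (@le_lt_trans _ _ (`|a y| * (`|M| + 1))) ?ler_wpM2l//.
  by rewrite (le_trans (bM y)) // ler_wpDr // real_ler_norm ?num_real.
by rewrite -ltr_pdivlMr.
Qed.

Section hinge_huber.
Variables (R : realType) (delta : R).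
Implicit Types t a b : R.

(* 2 delta Huber(max(t, 0); delta), written piecewise polynomially so that
   [nra] can handle it; see [Huber_max0]. *)
Definition hinge_huber t :=
  if t <= 0 then 0 else if t < delta then t ^+ 2 else 2 * delta * t - delta ^+ 2.

Definition hinge_huber' t := 2 * Num.min (Num.max t 0) delta.

Lemma Huber_max0 t : 0 < delta ->
  Huber delta (Num.max t 0) / delta = hinge_huber t / (2 * delta).
Proof.
move=> delta0; rewrite /Huber /hinge_huber.
have [t0|t0] := leP t 0; first by rewrite normr0 delta0 expr0n /= !mul0r.
by rewrite gtr0_norm //; case: ltP => _; field; rewrite gt_eqF.
Qed.

Lemma hinge_huber_taylor a b : 0 < delta ->
  `|hinge_huber b - hinge_huber a - hinge_huber' a * (b - a)|
    <= (b - a) ^+ 2.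
Proof.
move=> delta0; rewrite /hinge_huber /hinge_huber' ler_norml.
case: (leP b 0) => hb; case: (leP a 0) => ha; rewrite ?(min_l (ltW delta0));
  case: (ltP a delta) => ha2; case: (ltP b delta) => hb2; apply/andP; split;
  have := sqr_ge0 (b - a); rewrite !expr2; nra.
Qed.

Lemma hinge_huber_le t : 0 < delta -> `|hinge_huber t| <= t ^+ 2.
Proof.
move=> delta0; rewrite /hinge_huber ler_norml.
case: (leP t 0) => t0; last case: (ltP t delta) => td; apply/andP; split;
  have := sqr_ge0 (t - delta); rewrite !expr2; nra.
Qed.

Lemma hinge_huber'0 : 0 < delta -> hinge_huber' 0 = 0.
Proof. by move=> delta0; rewrite /hinge_huber' maxxx min_l ?mulr0 // ltW. Qed.

Lemma is_diff_hinge_huber t : 0 < delta ->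
  is_diff t hinge_huber ( *:%R (hinge_huber' t)).
Proof.
move=> delta0; apply: (@is_diff_quadratic _ _ _ _ _ t 1) => [|h].
  exact: scaler_continuous.
have := hinge_huber_taylor t (h + t) delta0.
by rewrite addrK mul1r real_normK ?num_real.
Qed.

Lemma continuous_hinge_huber' : continuous hinge_huber'.
Proof.
move=> t.
have clip_cont : {for t, continuous (fun s : R => Num.min (Num.max s 0) delta)}.
  by apply: continuous_min (continuous_max _ _) _ => //; exact: cst_continuous.
exact: continuousM (@cst_continuous _ R 2 t) clip_cont.
Qed.

End hinge_huber.

Lemma is_diff_sqrt (R : realType) (p : R) : 0 < p ->
  is_diff p Num.sqrt ( *:%R (2 * Num.sqrt p)^-1).
Proof.
move=> p0; have sqrt_p := is_derive1_sqrt p0.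
have dsqrt : derivable Num.sqrt p 1 by apply: ex_derive.
apply: DiffDef; first exact/derivable1_diffP.
by rewrite deriv1E // derive1E derive_val; apply/funext => h; exact: mulrC.
Qed.

Section centered_statistics.
Context {R : realType} {d : nat}.
Hypothesis d_ge2 : (2 <= d)%N.
Local Notation V := 'rV[R]_d.
Implicit Types x y h : V.

Definition vcenter (j : 'I_d) (x : V) : R := x ord0 j - vmean x.

Definition vvar (x : V) : R := (\sum_(l < d) vcenter l x ^+ 2) / (d.-1)%:R.

Lemma vstdE x : vstd x = Num.sqrt (vvar x). Proof. by []. Qed.

Lemma predn_ge1 : 1 <= (d.-1)%:R :> R.
Proof. by rewrite ler1n -ltnS prednK // (leq_trans _ d_ge2). Qed.

Lemma predn_gt0 : 0 < (d.-1)%:R :> R.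
Proof. exact: lt_le_trans ltr01 predn_ge1. Qed.

Lemma vcenter_linear j : linear (vcenter j).
Proof.
move=> a u v; rewrite /vcenter /vmean !mxE.
under eq_bigr do rewrite !mxE.
rewrite big_split /= -mulr_sumr /GRing.scale /=; ring.
Qed.

Lemma vcenterD j x y : vcenter j (x + y) = vcenter j x + vcenter j y.
Proof. by have := vcenter_linear j 1 x y; rewrite !scale1r. Qed.

Lemma normr_vmean_le h : `|vmean h| <= `|h|.
Proof.
have d_gt0 : (0 < d)%N by rewrite (leq_trans _ d_ge2).
rewrite /vmean normrM normfV normr_nat ler_pdivrMr ?ltr0n //.
apply: (le_trans (ler_norm_sum _ _ _)).
rewrite mulr_natr -[X in _ *+ X]card_ord -sumr_const.
by apply: ler_sum => i _; exact: normr_entry_le.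
Qed.

Lemma normr_vcenter_le j h : `|vcenter j h| <= 2 * `|h|.
Proof.
rewrite /vcenter (le_trans (ler_normB _ _)) // mulr2n mulrDl mul1r.
by rewrite lerD ?normr_entry_le ?normr_vmean_le.
Qed.

Lemma is_diff_vcenter x j : is_diff x (vcenter j) (vcenter j).
Proof. exact: is_diff_bounded_linear (vcenter_linear j) (normr_vcenter_le j). Qed.

Lemma sum_vcenter x : \sum_(l < d) vcenter l x = 0.
Proof.
rewrite /vcenter sumrB sumr_const card_ord /vmean -[_ *+ d]mulr_natr divfK ?subrr //.
by rewrite pnatr_eq0 -lt0n (leq_trans _ d_ge2).
Qed.

Lemma sum_vcenter_mul x h :
  \sum_(l < d) vcenter l x * vcenter l h = \sum_(l < d) vcenter l x * h ord0 l.
Proof.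
rewrite {1}/vcenter; under eq_bigr do rewrite mulrBr.
by rewrite sumrB -mulr_suml sum_vcenter mul0r subr0.
Qed.

Lemma vvar_ge0 x : 0 <= vvar x.
Proof. by rewrite divr_ge0 ?ler0n // sumr_ge0 // => l _; exact: sqr_ge0. Qed.

Lemma is_diff_vvar x :
  is_diff x vvar (fun h => 2 * (\sum_(l < d) vcenter l x * h ord0 l) / (d.-1)%:R).
Proof.
have sq l : is_diff x (fun y => vcenter l y * vcenter l y)
    (fun h => vcenter l x * vcenter l h + vcenter l x * vcenter l h).
  exact: is_diffM (is_diff_vcenter x l) (is_diff_vcenter x l).
apply: (eq_is_diff (is_diffZ (d.-1)%:R^-1 (is_diff_sum sq))) => [y|h];
  rewrite scalrfctE -[_ *: _]/(_ * _) mulrC.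
  by congr (_ * _); apply: eq_bigr => l _; rewrite expr2.
by rewrite big_split /= sum_vcenter_mul -mulr2n mulr_natl.
Qed.

(* At constant vectors [vstd x = 0] and the division makes this 0. *)
Definition dstd x h : R :=
  (\sum_(l < d) vcenter l x * h ord0 l) / ((d.-1)%:R * vstd x).

Lemma is_diff_vstd x : 0 < vstd x -> is_diff x (@vstd R d) (dstd x).
Proof.
move=> std_gt0; have var_gt0 : 0 < vvar x by rewrite -sqrtr_gt0.
apply: (eq_is_diff (is_diff_comp (is_diff_vvar x) (is_diff_sqrt var_gt0))) => // h.
rewrite /= /dstd -vstdE -[_ *: _]/(_ * _); field.
by rewrite !gt_eqF ?predn_gt0.
Qed.

Lemma continuous_vstd : continuous (@vstd R d).
Proof.
move=> x; rewrite -[@vstd R d]/(Num.sqrt \o vvar).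
apply: continuous_comp (@sqrt_continuous _ _).
exact: is_diff_continuous (is_diff_vvar x).
Qed.

Lemma vstd_eq0 x l : vstd x = 0 -> vcenter l x = 0.
Proof.
move=> /eqP; rewrite vstdE sqrtr_eq0 => var_le0.
have var0 : \sum_(i < d) vcenter i x ^+ 2 = 0.
  have : vvar x = 0 by apply/le_anti; rewrite var_le0 vvar_ge0.
  by move/eqP; rewrite mulf_eq0 invr_eq0 (gt_eqF predn_gt0) orbF => /eqP.
apply/eqP; rewrite -sqrf_eq0; apply/eqP.
exact: (psumr_eq0P (fun i _ => sqr_ge0 (vcenter i x)) var0).
Qed.

Lemma vstd_le h : vstd h <= 3 * `|h|.
Proof.
have h3_ge0 : 0 <= 3 * `|h| by rewrite mulr_ge0.
rewrite vstdE -(ger0_norm h3_ge0) -sqrtr_sqr ler_sqrt ?sqr_ge0 //.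
have sum_le : \sum_(l < d) vcenter l h ^+ 2 <= (2 * `|h|) ^+ 2 *+ d.
  rewrite -[X in _ *+ X]card_ord -sumr_const; apply: ler_sum => l _.
  by rewrite -real_normK ?num_real // lerXn2r ?nnegrE ?normr_vcenter_le ?mulr_ge0.
rewrite /vvar ler_pdivrMr ?predn_gt0 // (le_trans sum_le) //.
have dE : d%:R = (d.-1)%:R + 1 :> R by rewrite natr1 prednK // (leq_trans _ d_ge2).
rewrite -mulr_natr dE.
have := predn_ge1; have := normr_ge0 h; nra.
Qed.

Lemma dstd_delta y j :
  dstd y (delta_mx 0 j) = vcenter j y / ((d.-1)%:R * vstd y).
Proof.
rewrite /dstd (bigD1 j) //= mxE !eqxx mulr1 big1 ?addr0 // => l /negbTE lj.
by rewrite mxE lj andbF mulr0.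
Qed.

Lemma normr_dstd_delta_le y j : `|dstd y (delta_mx 0 j)| <= 1.
Proof.
rewrite dstd_delta; have [std0|std_neq0] := eqVneq (vstd y) 0.
  by rewrite std0 mulr0 invr0 mulr0 normr0.
have std_gt0 : 0 < vstd y by rewrite lt0r std_neq0 sqrtr_ge0.
have den_gt0 : 0 < (d.-1)%:R * vstd y by rewrite mulr_gt0 ?predn_gt0.
have center_sq : vcenter j y ^+ 2 <= (d.-1)%:R * vstd y ^+ 2.
  rewrite vstdE sqr_sqrtr ?vvar_ge0 // /vvar mulrC divfK ?(gt_eqF predn_gt0) //.
  by rewrite (bigD1 j) //= lerDl sumr_ge0 // => l _; exact: sqr_ge0.
rewrite normrM normfV (gtr0_norm den_gt0) ler_pdivrMr // mul1r.
rewrite -(ler_sqr (normr_ge0 _) (ltW den_gt0)) real_normK ?num_real //.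
rewrite (le_trans center_sq) //.
have := predn_ge1; have := sqr_ge0 (vstd y); rewrite !expr2; nra.
Qed.

End centered_statistics.

Section huber_stat_top.
Context {R : realType} {d : nat}.
Variables (q delta : R).
Hypotheses (d_ge2 : (2 <= d)%N) (delta_gt0 : 0 < delta).
Local Notation V := 'rV[R]_d.
Implicit Types (x y h : V) (i j : 'I_d).

Definition excess i x : R := vcenter i x - vstd x * q.

Definition huber_top i x : R := hinge_huber delta (excess i x) / (2 * delta).

Definition dhuber_top i x h : R :=
  hinge_huber' delta (excess i x) / (2 * delta) * (vcenter i h - q * dstd x h).

Lemma continuous_dstd_delta j x : vstd x != 0 ->
  {for x, continuous (fun y => dstd y (delta_mx 0 j))}.
Proof.
move=> std_neq0.
rewrite (_ : (fun y => _) = fun y => vcenter j y * ((d.-1)%:R * vstd y)^-1); last first.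
  by apply/funext => y; rewrite dstd_delta.
apply: continuousM.
  exact: is_diff_continuous (is_diff_vcenter d_ge2 x j).
apply: continuousV; first by rewrite mulf_neq0 // gt_eqF // predn_gt0.
apply: continuousM; first exact: cst_continuous.
exact: continuous_vstd.
Qed.

Lemma continuous_excess i : continuous (excess i).
Proof.
move=> x; apply: continuousB; first exact: is_diff_continuous (is_diff_vcenter d_ge2 x i).
by apply: continuousM; [exact: continuous_vstd | exact: cst_continuous].
Qed.

Lemma vstd_eq0_translate x h : vstd x = 0 -> vstd (h + x) = vstd h.
Proof.
move=> std0; rewrite !vstdE /vvar; congr (Num.sqrt (_ / _)).
by apply: eq_bigr => l _; rewrite vcenterD (vstd_eq0 d_ge2 l std0) addr0.
Qed.

Lemma excess_translate x h i : vstd x = 0 -> excess i (h + x) = excess i h.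
Proof.
move=> std0; rewrite /excess vstd_eq0_translate //.
by rewrite vcenterD (vstd_eq0 d_ge2 i std0) addr0.
Qed.

Lemma normr_excess_le i h : `|excess i h| <= (2 + 3 * `|q|) * `|h|.
Proof.
rewrite /excess (le_trans (ler_normB _ _)) // normrM ger0_norm ?sqrtr_ge0 //.
have := normr_vcenter_le d_ge2 i h; have := vstd_le d_ge2 h.
have := normr_ge0 q; have := normr_ge0 h; nra.
Qed.

Lemma excess_eq0 x i : vstd x = 0 -> excess i x = 0.
Proof. by move=> std0; rewrite /excess (vstd_eq0 d_ge2 i std0) std0 mul0r subrr. Qed.

Lemma is_diff_excess x i : 0 < vstd x ->
  is_diff x (excess i) (fun h => vcenter i h - q * dstd x h).
Proof.
move=> std_gt0.
apply: (eq_is_diff (is_diffB (is_diff_vcenter d_ge2 x i) (is_diffZ q (is_diff_vstd d_ge2 std_gt0)))).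
  by move=> y; rewrite /excess !fctE mulrC.
by move=> h; rewrite !fctE.
Qed.

Lemma is_diff_huber_top i x : is_diff x (huber_top i) (dhuber_top i x).
Proof.
have [std0|std_neq0] := eqVneq (vstd x) 0.
  have flat h : `|huber_top i (h + x)| <= (2 + 3 * `|q|) ^+ 2 / (2 * delta) * `|h| ^+ 2.
    have delta2_gt0 : 0 < 2 * delta by rewrite mulr_gt0.
    rewrite /huber_top excess_translate // normrM normfV (gtr0_norm delta2_gt0).
    rewrite mulrAC ler_pM2r ?invr_gt0 // (le_trans (hinge_huber_le _ delta_gt0)) //.
    rewrite -exprMn -real_normK ?num_real // lerXn2r ?nnegrE ?mulr_ge0 ?addr_ge0 //.
    exact: normr_excess_le.
  apply: (eq_is_diff (is_diff_flat flat)) => // h.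
  by rewrite /dhuber_top excess_eq0 // hinge_huber'0 // !mul0r.
have std_gt0 : 0 < vstd x by rewrite lt0r std_neq0 sqrtr_ge0.
have := is_diff_comp (is_diff_excess i std_gt0) (is_diff_hinge_huber (excess i x) delta_gt0).
move/(is_diffZ (2 * delta)^-1)/eq_is_diff; apply => h; rewrite !fctE /=.
  by rewrite /huber_top [RHS]mulrC.
by rewrite /dhuber_top [_ / _]mulrC -mulrA.
Qed.

Lemma continuous_dhuber_top i j :
  continuous (fun y => dhuber_top i y (delta_mx 0 j)).
Proof.
move=> x; rewrite /dhuber_top.
have slope_cont :
    {for x, continuous (fun y => hinge_huber' delta (excess i y) / (2 * delta))}.
  apply: continuousM; last exact: cst_continuous.
  apply: continuous_comp; [exact: continuous_excess | exact: continuous_hinge_huber'].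
have [std0|std_neq0] := eqVneq (vstd x) 0.
  apply: (continuous_mul_bounded (M := `|vcenter i (delta_mx 0 j)| + `|q|) slope_cont).
    by rewrite excess_eq0 // hinge_huber'0 // mul0r.
  move=> y; rewrite (le_trans (ler_normB _ _)) // lerD2l normrM.
  by rewrite ler_piMr // normr_dstd_delta_le.
apply: continuousM slope_cont _.
apply: continuousB; first exact: cst_continuous.
by apply: continuousM; [exact: cst_continuous | exact: continuous_dstd_delta].
Qed.

Lemma C1_huber_top : C1 (fun x : V => \row_i huber_top i x).
Proof.
have F_diff x : is_diff x (fun y : V => \row_i huber_top i y)
                          (fun h => \row_i dhuber_top i x h).
  by apply: is_diff_row => i; exact: is_diff_huber_top.
split=> [x|]; first exact: ex_diff.
have -> : jacobian (fun y : V => \row_i huber_top i y) =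
          fun x => \matrix_(j, i) dhuber_top i x (delta_mx 0 j).
  by apply/funext => x; rewrite /jacobian diff_val; apply/matrixP => j i; rewrite !mxE.
move=> x; apply: continuous_mx => j i.
rewrite (_ : (fun y => _) = fun y => dhuber_top i y (delta_mx 0 j)).
  exact: continuous_dhuber_top.
by apply/funext => y; rewrite mxE.
Qed.

End huber_stat_top.

Lemma HuberStatTopE (R : realType) (d k : nat) (delta : R) : 0 < delta ->
  @HuberStatTop R d k delta =
    (fun x => \row_i huber_top (gauss_quantile (1 - k%:R / d%:R)) delta i x).
Proof.
move=> delta_gt0; apply/funext => x; apply/rowP => i.
rewrite /HuberStatTop /StatTop /SoftThreshold !mxE Huber_max0 //.
by rewrite /huber_top /excess /vcenter /threshold opprD addrA.
Qed.

Theorem theorem2 (R : realType) (d k : nat) (delta : R) :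
  (2 <= d)%N -> (1 <= k)%N -> (k <= d.-1)%N -> 0 < delta ->
  C1 (@HuberStatTop R d k delta).
Proof.
(* The bounds on k only keep the quantile finite; any threshold multiplier works. *)
move=> d_ge2 _ _ delta_gt0; rewrite HuberStatTopE //.
exact: C1_huber_top.
Qed.
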